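(* Let $p$ be an odd prime and $r$ an integer with $1\leq r<p-1$. Then ${r+p \brace p}_{\leq r}\equiv 0\pmod p$.
   Context: For integers $N\geq k\geq0$ and $r\ge1$, the $r$-restricted Stirling number of the second kind ${N \brace k}_{\leq r}$ is $\sum \frac{N!}{\prod_{m=1}^r j_m!(m!)^{j_m}}$ over $(j_1,\dots,j_r)\in\mathbb{N}^r$ with $\sum j_m=k$, $\sum m j_m=N$; equivalently the number of partitions of an $N$-element set into $k$ nonempty blocks of size at most $r$. *)

From mathcomp Require Import all_boot.
Set Implicit Arguments. Unset Strict Implicit. Unset Printing Implicit Defensive.

(* The index m : 'I_r stands for the block size m.+1 (so sizes 1..r);
   each j_m is bounded by N (automatic since m.+1 >= 1 and sum m j_m = N),
   so ranging over 'I_N.+1 loses nothing.  Each term is an integer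
   (a multinomial count), so the nat division is exact. *)
Definition rstirling (N k r : nat) : nat :=
  \sum_(j : {ffun 'I_r -> 'I_N.+1} |
          ((\sum_(m < r) (j m : nat)) == k) &&
          ((\sum_(m < r) (m.+1 * j m)) == N))
     (N`! %/ \prod_(m < r) ((j m)`! * (m.+1)`! ^ (j m))).

From mathcomp Require Import all_boot.

Set Implicit Arguments.
Unset Strict Implicit.
Unset Printing Implicit Defensive.

(* Each term N! / D_j of the sum has a denominator D_j dividing N!, as
   N! / D_j counts the set partitions of type j.  For N = r + p and k = p,
   every factor of D_j is a factorial of a number below p: block sizes are at
   most r < p, and no multiplicity j_m reaches p, since p blocks of size m + 1
   would give r + p = (m + 1) p, i.e. r = m p, impossible for 0 < r < p.  So p
   is coprime to D_j and divides N!, hence divides N! / D_j. *)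

Lemma dvdn_fact_sum (I : Type) (s : seq I) (P : pred I) (a : I -> nat) :
  \prod_(i <- s | P i) (a i)`! %| (\sum_(i <- s | P i) a i)`!.
Proof.
apply: (big_rec2 (fun x y => x %| y`!)) => // i x y _ dvd_xy.
rewrite -(bin_fact (leq_addr y (a i))) addKn.
exact/dvdn_mull/dvdn_mul.
Qed.

Lemma dvdn_fact_mul (n j : nat) : j`! * n.+1`! ^ j %| (n.+1 * j)`!.
Proof.
elim: j => [|j IHj]; first by rewrite muln0.
have sub_def : n.+1 * j.+1 - n.+1 = n.+1 * j by rewrite mulnS addKn.
have bin_def : 'C(n.+1 * j.+1, n.+1) = j.+1 * 'C((n.+1 * j.+1).-1, n).
  by apply/eqP; rewrite -(eqn_pmul2l (ltn0Sn n)) mulnA mul_bin_diag.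
rewrite -(bin_fact (leq_pmulr _ (ltn0Sn j))) sub_def bin_def.
rewrite factS expnS mulnACA [X in _ %| X]mulnACA.
exact/dvdn_mul/dvdn_mull.
Qed.

Lemma prime_dvd_fact (p n : nat) : prime p -> (p %| n`!) = (p <= n).
Proof.
move=> p_pr; apply/idP/idP; last by move=> le_pn; rewrite dvdn_fact ?prime_gt0.
elim: n => [|n IHn]; first by rewrite Euclid_dvd1.
rewrite factS Euclid_dvdM // => /orP[/dvdn_leq-> // | /IHn].
exact: leqW.
Qed.

Definition rstirling_denom {r : nat} (j : 'I_r -> nat) : nat :=
  \prod_(m < r) ((j m)`! * (m.+1)`! ^ (j m)).

Lemma dvdn_rstirling_denom (N r : nat) (j : 'I_r -> nat) :
  \sum_(m < r) m.+1 * j m = N -> rstirling_denom j %| N`!.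
Proof.
move=> <-; apply: (@dvdn_trans (\prod_(m < r) (m.+1 * j m)`!)).
  apply: (big_rec2 (fun x y => x %| y)) => // m x y _.
  exact/dvdn_mul/dvdn_fact_mul.
exact: dvdn_fact_sum.
Qed.

Lemma coprime_rstirling_denom (p r : nat) (j : 'I_r -> nat) :
  prime p -> r < p -> (forall m, j m < p) -> coprime p (rstirling_denom j).
Proof.
move=> p_pr lt_rp lt_jp.
apply: (big_ind (coprime p)) => [|x y | m _]; first exact: coprimen1.
  by rewrite coprimeMr => -> ->.
have coprime_fact n : n < p -> coprime p n`!.
  by rewrite prime_coprime // prime_dvd_fact // -ltnNge.
by rewrite coprimeMr coprimeXr ?coprime_fact // (leq_ltn_trans (ltn_ord m)).
Qed.

Lemma partition_multiplicity_lt (p r : nat) (j : 'I_r -> nat) :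
    0 < r -> r < p ->
    \sum_(m < r) j m = p -> \sum_(m < r) m.+1 * j m = r + p ->
  forall m, j m < p.
Proof.
move=> r_gt0 lt_rp sum_j wsum_j m.
have excess_r : \sum_(i < r) i * j i = r.
  apply/eqP; rewrite -(eqn_add2r p) -{1}sum_j -big_split /= -wsum_j.
  by apply/eqP/eq_bigr => i _; rewrite mulSnr.
have le_jp : j m <= p by rewrite -sum_j (bigD1 m) //= leq_addr.
rewrite ltn_neqAle le_jp andbT; apply/eqP => jm_p.
have /forall_inP others0 : [forall (i | i != m), j i == 0].
  move: sum_j; rewrite (bigD1 m) //= jm_p -[RHS]addn0 => /addnI/eqP.
  by rewrite sum_nat_eq0.
have r_def : m * p = r.
  rewrite -[RHS]excess_r (bigD1 m) //= jm_p big1 ?addn0 // => i ne_im.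
  by rewrite (eqP (others0 i ne_im)) muln0.
have : 0 < m * p < p by rewrite r_def r_gt0.
by case: (nat_of_ord m) => [|k] /andP[// _]; rewrite mulSn ltnNge leq_addr.
Qed.

Theorem lemma3p12 (p r : nat) :
  prime p -> odd p -> 1 <= r -> r < p - 1 ->
  p %| rstirling (r + p) p r.
Proof.
move=> p_pr _ r_gt0 lt_r_pred_p.
have lt_rp : r < p := leq_trans lt_r_pred_p (leq_subr 1 p).
apply: dvdn_sum => j /andP[/eqP sum_j /eqP wsum_j].
have denom_dvd := dvdn_rstirling_denom wsum_j.
have lt_jp := partition_multiplicity_lt r_gt0 lt_rp sum_j wsum_j.
have denom_coprime := coprime_rstirling_denom p_pr lt_rp lt_jp.
change (p %| (r + p)`! %/ rstirling_denom (fun m => j m)).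
by rewrite dvdn_divRL // Gauss_dvd // denom_dvd prime_dvd_fact // leq_addl.
Qed.
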